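(* Let $s\ge 1$ be an integer and $0<\epsilon<1$ a constant. For integers $2\le n_0\le n_1\le\dots\le n_s$, let $k_i=\frac{\log n_s}{\log n_i}$ for $0\le i\le s-1$, let $x_0$ be the unique root of the equation $(s+\epsilon)x-1-\sum_{j=0}^{s-1}x^{\frac{k_j-1}{k_j}}=0$ in the interval $[1,\infty)$, and let $r=\left\lceil\frac{\log n_s}{\log x_0}\right\rceil+1$. Then $ch(K_{n_0,\dots,n_s})\le r$ for all such tuples with $n_s$ large enough (in terms of $s$ and $\epsilon$).
   Context: All logarithms are to base 2. For a graph $G=(V,E)$, the choice number $ch(G)$ is the minimum integer $k$ such that for every assignment of a list $S(v)$ of at least $k$ colors to each vertex $v\in V$, there is a proper vertex coloring of $G$ assigning to each vertex $v$ a color from $S(v)$. $K_{n_0,\dots,n_s}$ denotes the complete $(s+1)$-partite graph with parts of sizes $n_0,\dots,n_s$. *)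

From mathcomp Require Import all_boot.
From Stdlib Require Import Reals.

Set Implicit Arguments.
Unset Strict Implicit.
Unset Printing Implicit Defensive.

(* L-colouring with lists: each vertex v gets a list L v of colours (colours are
   natural numbers; any finite list assignment can be encoded this way). *)
Definition choosable (V : finType) (adj : rel V) (k : nat) : Prop :=
  forall L : V -> seq nat,
    (forall v, k <= size (undup (L v))) ->
    exists f : V -> nat,
      (forall v, f v \in L v) /\ (forall u v, adj u v -> f u != f v).

Definition ch_le (V : finType) (adj : rel V) (r : nat) : Prop :=
  exists k, k <= r /\ choosable adj k.

(* Complete (s+1)-partite graph K_{n_0,...,n_s}: vertex (i, a) is the a-th
   vertex of part i; two vertices are adjacent iff they lie in different parts. *)
Definition Kvert (s : nat) (n : 'I_s.+1 -> nat) : finType :=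
  {i : 'I_s.+1 & 'I_(n i)}.

Definition Kadj (s : nat) (n : 'I_s.+1 -> nat) : rel (Kvert n) :=
  fun u v => tag u != tag v.

Definition Rceil (x : R) : Z := (- Int_part (- x))%Z.

Definition kexp (s : nat) (n : 'I_s.+1 -> nat) (j : 'I_s) : R :=
  (ln (INR (n ord_max)) / ln (INR (n (widen_ord (leqnSn s) j))))%R.

Definition Fx (s : nat) (eps : R) (n : 'I_s.+1 -> nat) (x : R) : R :=
  ((INR s + eps) * x - 1
   - \big[Rplus/0%R]_(j < s) Rpower x ((kexp n j - 1) / kexp n j))%R.

Definition rbound (s : nat) (n : 'I_s.+1 -> nat) (x0 : R) : nat :=
  Z.to_nat (Rceil (ln (INR (n ord_max)) / ln x0) + 1)%Z.

(* Alon's probabilistic argument with unequal part weights: send every colour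
   independently to part i with probability p_i.  A vertex of part i, whose list
   has at least r colours, gets no colour of its own part with probability at
   most (1 - p_i)^r, so a proper list colouring exists as soon as
   sum_i n_i (1 - p_i)^r < 1.  Choose 1 - p_i <= q_i := lam n_i^(-1/r) with
   lam = s / (s + eps): then sum_i n_i q_i^r = (s + 1) lam^r < 1 once r is large,
   and such a distribution p exists as soon as sum_i q_i >= s, that is
   sum_i n_i^(-1/r) >= s + eps.  The latter follows termwise from
   r log x0 > log n_s and sum_i n_i^(-log x0 / log n_s) = s + eps, which is the
   equation defining x0 divided by x0.  Finally eps x0 <= 1, so
   r > log n_s / log (1/eps) is large when n_s is. *)

From mathcomp Require Import all_boot all_order all_algebra.
From Stdlib Require Import Reals Lra ZArith.
From mathcomp Require Import Rstruct.

Set Implicit Arguments.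
Unset Strict Implicit.
Unset Printing Implicit Defensive.

Import Order.TTheory GRing.Theory Num.Theory.

Lemma count_undup_cons (c : nat) S (l : seq nat) : c \notin S ->
  count (mem (c :: S)) (undup l) = (c \in l) + count (mem S) (undup l).
Proof.
move=> cS; rewrite -mem_undup -(count_uniq_mem c (undup_uniq l)) -count_predUI.
rewrite (@eq_count _ (predI _ _) pred0) => [|x /=]; last first.
  by apply/negbTE; apply: contra cS => /andP[/eqP <-].
by rewrite count_pred0 addn0; apply: eq_count => x; rewrite /= in_cons.
Qed.

Local Open Scope ring_scope.

Section PartiteListColouring.

Variables (R : realDomainType) (V I : finType) (part : V -> I) (L : V -> seq nat).
Variable p : I -> R.
Hypothesis p_ge0 : forall i, 0 <= p i.
Hypothesis p_sum1 : \sum_i p i = 1.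

Lemma one_sub_p_ge0 i : 0 <= 1 - p i.
Proof.
rewrite subr_ge0 -p_sum1 (bigD1 i) //= lerDl.
by apply: sumr_ge0 => j _; apply: p_ge0.
Qed.

Lemma exists_lt1_of_average (F : I -> R) :
  \sum_i p i * F i < 1 -> exists i, F i < 1.
Proof.
move=> avg; apply/existsP; apply: contraLR avg; rewrite negb_exists -leNgt.
move=> /forallP F_ge1; rewrite -p_sum1; apply: ler_sum => i _.
by rewrite -[leLHS]mulr1 ler_wpM2l // leNgt F_ge1.
Qed.

Lemma sum_p_avoid (j : I) (b : bool) :
  \sum_i p i * (if b && (i == j) then 0 else 1) = (1 - p j) ^+ b.
Proof.
case: b => /=; last by under eq_bigr do rewrite mulr1.
rewrite (bigD1 j) //= eqxx mulr0 add0r expr1.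
under eq_bigr => i /negbTE -> do rewrite mulr1.
by rewrite -p_sum1 [in RHS](bigD1 j) //= addrAC subrr add0r.
Qed.

(* A colour-to-part map [g] is fixed on the colours outside [S], and the colours
   of [S] are still to be sent independently to part [i] with probability [p i].
   Vertex [v] is [covered] if a fixed colour of its list already goes to its part;
   [miss_prob S g v] is then the probability that no colour of [L v] ends up in
   the part of [v]. *)
Definition covered (g : nat -> I) (S : seq nat) (v : V) : bool :=
  has (fun c => (c \notin S) && (g c == part v)) (L v).

Definition miss_prob (S : seq nat) (g : nat -> I) (v : V) : R :=
  if covered g S v then 0 else (1 - p (part v)) ^+ count (mem S) (undup (L v)).

Definition expected_misses (S : seq nat) (g : nat -> I) : R :=
  \sum_v miss_prob S g v.

Lemma miss_prob_ge0 S g v : 0 <= miss_prob S g v.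
Proof. by rewrite /miss_prob; case: ifP => // _; rewrite exprn_ge0 ?one_sub_p_ge0. Qed.

Lemma covered_update g c i S v : c \notin S ->
  covered [eta g with c |-> i] S v =
    ((c \in L v) && (i == part v)) || covered g (c :: S) v.
Proof.
move=> cS; apply/hasP/orP => [[x xL /andP[xS] /=]|].
  case: (eqVneq x c) => [<- ip|xc gx]; first by left; rewrite xL ip.
  by right; apply/hasP; exists x; rewrite // inE (negbTE xc) /= xS gx.
case=> [/andP[cL /eqP ->]|/hasP[x xL]]; first by exists c; rewrite //= cS !eqxx.
rewrite inE negb_or => /andP[/andP[xc xS] gx].
by exists x; rewrite //= xS (negbTE xc).
Qed.

Lemma miss_prob_update c S g v : c \notin S ->
  \sum_i p i * miss_prob S [eta g with c |-> i] v = miss_prob (c :: S) g v.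
Proof.
move=> cS; rewrite /miss_prob count_undup_cons // exprD.
under eq_bigr => i _ do rewrite covered_update //.
case: (covered g (c :: S) v); first by apply: big1 => i _; rewrite orbT mulr0.
rewrite -sum_p_avoid mulr_suml; apply: eq_bigr => i _; rewrite orbF.
by case: ifP => _; rewrite ?mulr0 ?mul0r ?mulr1.
Qed.

Lemma expected_misses_update c S g : c \notin S ->
  \sum_i p i * expected_misses S [eta g with c |-> i] = expected_misses (c :: S) g.
Proof.
move=> cS; under eq_bigr do rewrite mulr_sumr.
by rewrite exchange_big; apply: eq_bigr => v _; apply: miss_prob_update.
Qed.

(* The method of conditional expectations: fix the colours of [S] one by one,
   never letting the expected number of uncovered vertices reach [1]. *)
Lemma exists_covering_map {S g} : uniq S -> expected_misses S g < 1 ->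
  exists g' : nat -> I, forall v, has (fun c => g' c == part v) (L v).
Proof.
elim: S g => [|c S IH] g /=.
  move=> _ lt1; exists g => v; apply: contraLR lt1 => not_cov; rewrite -leNgt.
  have -> : 1 = miss_prob [::] g v.
    rewrite /miss_prob /covered (@eq_has _ _ (fun c => g c == part v)) //.
    by rewrite (negbTE not_cov) (@eq_count _ _ pred0) // count_pred0.
  by rewrite /expected_misses (bigD1 v) //= lerDl; apply: sumr_ge0 => u _; apply: miss_prob_ge0.
move=> /andP[cS uniqS]; rewrite -expected_misses_update //.
by case/exists_lt1_of_average => i; apply: IH.
Qed.

Lemma miss_prob_all_pending S g v : {subset L v <= S} ->
  miss_prob S g v = (1 - p (part v)) ^+ size (undup (L v)).
Proof.
move=> LS; rewrite /miss_prob /covered.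
have -> : has (fun c => (c \notin S) && (g c == part v)) (L v) = false.
  by apply/hasPn => c /LS ->.
by rewrite -count_predT; congr (_ ^+ _); apply: eq_in_count => c; rewrite mem_undup => /LS.
Qed.

Lemma partite_list_colouring (r : nat) :
  (forall v, r <= size (undup (L v)))%nat -> \sum_v (1 - p (part v)) ^+ r < 1 ->
  exists f : V -> nat,
    (forall v, f v \in L v) /\ (forall u w, part u != part w -> f u != f w).
Proof.
move=> size_L misses_lt1.
have [i0 _ | I0] := pickP (@predT I); last first.
  have : \sum_i p i = 0 by apply: big1 => i; have := I0 i.
  by rewrite p_sum1 => /eqP; rewrite oner_eq0.
pose S := undup (flatten [seq L v | v <- enum V]).
have LS v : {subset L v <= S}.
  move=> c cL; rewrite mem_undup; apply/flattenP; exists (L v) => //.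
  by apply/mapP; exists v; rewrite ?mem_enum.
have pending_lt1 : expected_misses S (fun=> i0) < 1.
  apply: le_lt_trans misses_lt1; apply: ler_sum => v _.
  by rewrite miss_prob_all_pending // ler_wiXn2l ?one_sub_p_ge0 ?gerBl.
have [g cover] := exists_covering_map (undup_uniq _) pending_lt1.
pose f v := nth 0%nat (L v) (find (fun c => g c == part v) (L v)).
exists f; split=> [v|u w].
  by rewrite /f mem_nth // -has_find.
apply: contra => /eqP fuw.
by rewrite -(eqP (nth_find 0%nat (cover u))) -(eqP (nth_find 0%nat (cover w))) -/(f u) fuw.
Qed.

End PartiteListColouring.

Lemma exists_distribution_above (R : numDomainType) (I : finType) (i0 : I) (d : I -> R) :
  (forall i, 0 <= d i) -> \sum_i d i <= 1 ->
  exists p : I -> R, [/\ forall i, 0 <= p i, \sum_i p i = 1 & forall i, d i <= p i].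
Proof.
move=> d_ge0 sum_le1.
pose p i := d i + (i == i0)%:R * (1 - \sum_j d j).
have d_le_p i : d i <= p i by rewrite lerDl mulr_ge0 ?subr_ge0.
exists p; split=> // [i|]; first exact: le_trans (d_ge0 i) (d_le_p i).
rewrite /p big_split /= -mulr_suml.
have -> : \sum_i (i == i0)%:R = 1 :> R.
  by rewrite (bigD1 i0) //= eqxx big1 ?addr0 // => i /negbTE ->.
by rewrite mul1r addrC subrK.
Qed.

Lemma sum_Kvert (R : nmodType) (s : nat) (n : 'I_s.+1 -> nat) (F : 'I_s.+1 -> R) :
  \sum_(v : Kvert n) F (tag v) = \sum_i F i *+ n i.
Proof.
rewrite -(sig_big_dep xpredT (fun _ _ => true) (fun i _ => F i)) /=.
by apply: eq_bigr => i _; rewrite sumr_const card_ord.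
Qed.

Lemma Kadj_choosable_weights (R : realDomainType) (s : nat) (n : 'I_s.+1 -> nat)
    (q : 'I_s.+1 -> R) (r : nat) :
  (forall i, q i <= 1) -> s%:R <= \sum_i q i -> \sum_i q i ^+ r *+ n i < 1 ->
  choosable (@Kadj s n) r.
Proof.
move=> q_le1 sum_q_ge q_small L size_L.
have d_ge0 i : 0 <= 1 - q i by rewrite subr_ge0.
have d_sum_le1 : \sum_i (1 - q i) <= 1.
  by rewrite sumrB sumr_const card_ord mulrSr addrAC gerDr subr_le0.
have [p [p_ge0 p_sum1 q_ge]] := exists_distribution_above ord0 d_ge0 d_sum_le1.
apply: (partite_list_colouring p_ge0 p_sum1 size_L).
rewrite (sum_Kvert n (fun i => (1 - p i) ^+ r)).
apply: le_lt_trans q_small; apply: ler_sum => i _.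
have miss_ge0 := one_sub_p_ge0 p_ge0 p_sum1 i.
have miss_le_q : 1 - p i <= q i by rewrite lerBlDr addrC -lerBlDr.
rewrite lerMn2r lerXn2r ?orbT // nnegrE //; exact: le_trans miss_ge0 miss_le_q.
Qed.

Local Close Scope ring_scope.
Local Open Scope R_scope.

Lemma big_RplusE (m : nat) (F : 'I_m -> R) :
  \big[Rplus/0]_(i < m) F i = \big[GRing.add/GRing.zero]_(i < m) F i.
Proof. by []. Qed.

Lemma ln_gt0 x : 1 < x -> 0 < ln x.
Proof. by move=> x_gt1; rewrite -ln_1; apply: ln_increasing; lra. Qed.

Lemma Rpower_1_l y : Rpower 1 y = 1.
Proof. by rewrite /Rpower ln_1 Rmult_0_r exp_0. Qed.

Lemma Rpower_le1 x y : 1 <= x -> y <= 0 -> Rpower x y <= 1.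
Proof. by move=> x_ge1 y_le0; rewrite -(Rpower_O x); [apply: Rle_Rpower | lra]. Qed.

Lemma Fx_at_1 (s : nat) (eps : R) (n : 'I_s.+1 -> nat) : Fx eps n 1 = eps - 1.
Proof.
rewrite /Fx big_RplusE.
under eq_bigr do rewrite Rpower_1_l.
rewrite sumr_const card_ord -INRE; lra.
Qed.

Lemma ler_big_Rplus (m : nat) (F G : 'I_m -> R) :
  (forall i, F i <= G i) -> \big[Rplus/0]_(i < m) F i <= \big[Rplus/0]_(i < m) G i.
Proof. by move=> FG; rewrite !big_RplusE; apply/RleP/ler_sum => i _; apply/RleP. Qed.

Lemma Rpower_neg_ln_ratio x m : 0 < x -> 1 < m -> Rpower m (- (ln x / ln m)) = / x.
Proof.
move=> x_gt0 m_gt1; rewrite /Rpower -[in RHS](exp_ln x) // -exp_Ropp; congr exp.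
by field; apply: Rgt_not_eq; apply: ln_gt0.
Qed.

Lemma Rpower_inv_pow x (r : nat) : 0 < x -> (0 < r)%nat -> Rpower x (- / INR r) ^ r = / x.
Proof.
move=> x_gt0 r_gt0; rewrite -Rpower_pow ?Rpower_mult; last exact: exp_pos.
have r_ne0 : INR r <> 0 by apply: not_0_INR; apply/eqP; rewrite -lt0n.
by rewrite (_ : - / INR r * INR r = - 1) ?Rpower_Ropp ?Rpower_1 //; field.
Qed.

Lemma inv_le_div a b c : 0 < a -> 0 < b -> 0 < c -> b < a * c -> / a <= c / b.
Proof.
move=> a_gt0 b_gt0 c_gt0 b_lt.
rewrite (_ : c / b = / (b / c)); last by field; split; apply: Rgt_not_eq.
apply: Rinv_le_contravar; first exact: Rdiv_lt_0_compat.
apply: (Rmult_le_reg_r c) => //; rewrite /Rdiv Rmult_assoc Rinv_l; lra.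
Qed.

(* The root equation divided by [x0]: [x0 ^ ((k_j - 1) / k_j) / x0] is
   [n_j ^ (- log x0 / log n_s)], and the extra term [1 / x0] is the one for [n_s]. *)
Lemma Fx_root_sum (s : nat) (eps : R) (n : 'I_s.+1 -> nat) (x0 : R) :
  (forall i, 1 < INR (n i)) -> 0 < x0 -> Fx eps n x0 = 0 ->
  \big[Rplus/0]_(i < s.+1) Rpower (INR (n i)) (- (ln x0 / ln (INR (n ord_max))))
    = INR s + eps.
Proof.
move=> n_gt1 x0_gt0 root.
have ln_n_gt0 i : 0 < ln (INR (n i)) by apply: ln_gt0.
have term j : Rpower (INR (n (widen_ord (leqnSn s) j))) (- (ln x0 / ln (INR (n ord_max))))
              = Rpower x0 ((kexp n j - 1) / kexp n j) * / x0.
  rewrite /Rpower -(exp_ln x0) // -exp_Ropp -exp_plus ln_exp /kexp; congr exp.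
  by field; split; apply: Rgt_not_eq.
rewrite big_ord_recr /= Rpower_neg_ln_ratio // big_RplusE (eq_bigr _ (fun j _ => term j)).
rewrite -mulr_suml -big_RplusE -RmultE.
have -> : \big[Rplus/0]_(j < s) Rpower x0 ((kexp n j - 1) / kexp n j)
          = (INR s + eps) * x0 - 1 by move: root; rewrite /Fx; lra.
by field; apply: Rgt_not_eq.
Qed.

Lemma Fx_root_bounds (s : nat) (eps : R) (n : 'I_s.+1 -> nat) (x0 : R) :
  (forall i, 1 < INR (n i)) -> eps < 1 -> 1 <= x0 -> Fx eps n x0 = 0 ->
  1 < x0 /\ eps * x0 <= 1.
Proof.
move=> n_gt1 eps_lt1 x0_ge1 root.
have x0_gt1 : 1 < x0 by move: root; case: (Req_dec x0 1) => [->|]; rewrite ?Fx_at_1; lra.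
have x0_gt0 : 0 < x0 by lra.
split=> //.
have sum_eq := Fx_root_sum n_gt1 x0_gt0 root.
rewrite big_ord_recr /= (Rpower_neg_ln_ratio x0_gt0 (n_gt1 ord_max)) in sum_eq.
have exponent_le0 : - (ln x0 / ln (INR (n ord_max))) <= 0.
  by rewrite -Ropp_0; apply/Ropp_le_contravar/Rlt_le/Rdiv_lt_0_compat; apply: ln_gt0.
have sum_le : \big[Rplus/0]_(j < s) Rpower (INR (n (widen_ord (leqnSn s) j)))
          (- (ln x0 / ln (INR (n ord_max)))) <= \big[Rplus/0]_(j < s) 1.
  by apply: ler_big_Rplus => j; apply: Rpower_le1 => //; apply/Rlt_le/n_gt1.
rewrite [X in _ <= X]big_RplusE sumr_const card_ord -INRE in sum_le.
have -> : 1 = / x0 * x0 by field; lra.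
apply: Rmult_le_compat_r; first lra.
apply: (Rplus_le_reg_l (INR s)); rewrite -sum_eq.
exact: Rplus_le_compat_r.
Qed.

Lemma lt_INR_ceil_succ (y : R) : 0 <= y -> y < INR (Z.to_nat (Rceil y + 1)).
Proof.
move=> y_ge0.
have ceil_ge : y <= IZR (Rceil y) by rewrite /Rceil opp_IZR; have := base_Int_part (- y); lra.
rewrite INR_IZR_INZ Z2Nat.id; last by apply: le_IZR; rewrite plus_IZR; lra.
by rewrite plus_IZR; lra.
Qed.

Lemma ln_lt_rbound_ln (s : nat) (n : 'I_s.+1 -> nat) (x0 : R) :
  1 < x0 -> 1 < INR (n ord_max) -> ln (INR (n ord_max)) < INR (rbound n x0) * ln x0.
Proof.
move=> x0_gt1 n_gt1; have l_gt0 := ln_gt0 x0_gt1.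
have ratio_ge0 := Rlt_le _ _ (Rdiv_lt_0_compat _ _ (ln_gt0 n_gt1) l_gt0).
have := Rmult_lt_compat_r _ _ _ l_gt0 (lt_INR_ceil_succ ratio_ge0).
by rewrite /Rdiv Rmult_assoc Rinv_l ?Rmult_1_r //; apply: Rgt_not_eq.
Qed.

Lemma lt_rbound (s : nat) (eps : R) (n : 'I_s.+1 -> nat) (x0 : R) (m : nat) :
  0 < eps -> 1 < x0 -> eps * x0 <= 1 -> 1 < INR (n ord_max) ->
  exp (INR m * - ln eps) < INR (n ord_max) -> (m < rbound n x0)%nat.
Proof.
move=> eps_gt0 x0_gt1 eps_x0 n_gt1 n_large.
have l_gt0 := ln_gt0 x0_gt1.
have l_le : ln x0 <= - ln eps.
  have : x0 <= / eps by apply: (Rmult_le_reg_l eps) => //; rewrite Rinv_r; lra.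
  rewrite -ln_Rinv //; case/Rle_lt_or_eq_dec => [/ln_increasing|->]; lra.
have m_lt := ln_increasing _ _ (exp_pos _) n_large; rewrite ln_exp in m_lt.
have r_gt := ln_lt_rbound_ln x0_gt1 n_gt1.
have r_le := Rmult_le_compat_l _ _ _ (pos_INR (rbound n x0)) l_le.
by apply/ssrnat.ltP/INR_lt/(Rmult_lt_reg_r (- ln eps)); lra.
Qed.

Lemma sum_Rpower_ge (s : nat) (eps : R) (n : 'I_s.+1 -> nat) (x0 : R) (r : nat) :
  (forall i, 1 < INR (n i)) -> 1 < x0 -> Fx eps n x0 = 0 ->
  ln (INR (n ord_max)) < INR r * ln x0 ->
  INR s + eps <= \big[Rplus/0]_(i < s.+1) Rpower (INR (n i)) (- / INR r).
Proof.
move=> n_gt1 x0_gt1 root ln_lt.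
have l_gt0 := ln_gt0 x0_gt1; have A_gt0 := ln_gt0 (n_gt1 ord_max).
have r_gt0 : 0 < INR r by have := pos_INR r; nra.
rewrite -(Fx_root_sum n_gt1 _ root); last lra.
apply: ler_big_Rplus => i; apply: Rle_Rpower; first exact/Rlt_le/n_gt1.
by apply: Ropp_le_contravar; apply: inv_le_div.
Qed.

Lemma pow_eventually_lt1 (c lam : R) : 0 < c -> 0 <= lam < 1 ->
  exists m0 : nat, forall m, (m0 <= m)%nat -> c * lam ^ m < 1.
Proof.
move=> c_gt0 lam01.
have [|m0 small] := pow_lt_1_zero lam _ (/ c) (Rinv_0_lt_compat _ c_gt0).
  by rewrite Rabs_right; lra.
exists m0 => m /ssrnat.leP m_ge; have := small m m_ge.
rewrite Rabs_right; last by apply/Rle_ge/pow_le; lra.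
move=> pow_lt; rewrite (_ : 1 = c * / c); last by field; lra.
exact: Rmult_lt_compat_l.
Qed.

Lemma Kadj_choosable_Rpower (s r : nat) (n : 'I_s.+1 -> nat) (lam : R) :
  (forall i, 1 < INR (n i)) -> (0 < r)%nat -> 0 <= lam <= 1 ->
  INR s <= lam * \big[Rplus/0]_(i < s.+1) Rpower (INR (n i)) (- / INR r) ->
  INR s.+1 * lam ^ r < 1 -> choosable (@Kadj s n) r.
Proof.
move=> n_gt1 r_gt0 lam01 sum_ge small.
pose t i := Rpower (INR (n i)) (- / INR r).
have t_gt0 i : 0 < t i by apply: exp_pos.
have t_le1 i : t i <= 1.
  apply: Rpower_le1; first exact/Rlt_le/n_gt1.
  by rewrite -Ropp_0; apply/Ropp_le_contravar/Rlt_le/Rinv_0_lt_compat/lt_0_INR/ssrnat.ltP.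
have pow_t i : INR (n i) * (lam * t i) ^ r = lam ^ r.
  have n_gt0 : 0 < INR (n i) by have := n_gt1 i; lra.
  rewrite Rpow_mult_distr Rpower_inv_pow //; field; exact: Rgt_not_eq.
apply: (@Kadj_choosable_weights _ _ n (fun i => lam * t i)).
- by move=> i; apply/RleP; rewrite -R1E; have := t_le1 i; have := t_gt0 i; nra.
- by apply/RleP; rewrite -INRE -mulr_sumr -big_RplusE.
- apply/RltP; rewrite (eq_bigr (fun=> lam ^ r)) => [|i _].
    by rewrite sumr_const card_ord -mulr_natl -INRE.
  by rewrite -mulr_natl -INRE -RpowE -RmultE pow_t.
Qed.

Local Close Scope R_scope.

Theorem theorem5 (s : nat) (eps : R) :
  1 <= s -> (0 < eps < 1)%R ->
  exists N : nat,
    forall n : 'I_s.+1 -> nat,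
      2 <= n ord0 ->
      (forall i j : 'I_s.+1, i <= j -> n i <= n j) ->
      N <= n ord_max ->
      forall x0 : R, (1 <= x0)%R -> Fx eps n x0 = 0%R ->
        ch_le (@Kadj s n) (rbound n x0).
Proof.
move=> s_ge1 [eps_gt0 eps_lt1].
have s_gt0 : (0 < INR s)%R by apply/lt_0_INR/ssrnat.ltP.
pose lam := (INR s / (INR s + eps))%R.
have lam_eps : (lam * (INR s + eps))%R = INR s by rewrite /lam; field; lra.
have lam01 : (0 <= lam < 1)%R by split; nra.
have [m0 lam_small] := pow_eventually_lt1 (lt_0_INR _ (Nat.lt_0_succ s)) lam01.
have [N N_large] := INR_unbounded (exp (INR m0 * - ln eps)).
exists N => n n0_ge2 n_mono N_le x0 x0_ge1 root.
have n_gt1 i : (1 < INR (n i))%R.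
  by apply/lt_1_INR/ssrnat.ltP; exact: leq_trans n0_ge2 (n_mono ord0 i (leq0n i)).
have [x0_gt1 eps_x0] := Fx_root_bounds n_gt1 eps_lt1 x0_ge1 root.
have ln_lt := ln_lt_rbound_ln x0_gt1 (n_gt1 ord_max).
have m0_lt_r : (m0 < rbound n x0)%nat.
  apply: lt_rbound eps_gt0 x0_gt1 eps_x0 (n_gt1 ord_max) _.
  by apply: (Rlt_le_trans _ _ _ N_large); apply/le_INR/ssrnat.leP.
exists (rbound n x0); split=> //.
apply: (Kadj_choosable_Rpower (lam := lam) n_gt1 (leq_ltn_trans (leq0n _) m0_lt_r)).
- by split; lra.
- rewrite -[X in (X <= _)%R]lam_eps; apply: Rmult_le_compat_l; first lra.
  exact: sum_Rpower_ge n_gt1 x0_gt1 root ln_lt.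
- exact: lam_small (ltnW m0_lt_r).
Qed.
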